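(* For any complex numbers $a,b,\alpha,\beta,\theta$ with $\beta a-\alpha b\neq0$, any natural number $n\ge1$, and any integer $k\ge0$ (with $k\le\lfloor n/2\rfloor$ in the first identity and $k\le\lfloor (n-1)/2\rfloor$ in the second), \[ \sum_{r=k}^{\lfloor n/2\rfloor}\binom{r}{k}\Psi\left(\begin{array}{cc|c} a & b & n \\ \alpha & \beta & r \end{array}\right)\theta^{r-k}=\Psi\left(\begin{array}{cc|c} a-\alpha\theta & b-\beta\theta & n \\ \alpha & \beta & k \end{array}\right), \] \[ \sum_{r=k}^{\lfloor (n-1)/2\rfloor}\binom{r}{k}\Phi\left(\begin{array}{cc|c} a & b & n \\ \alpha & \beta & r \end{array}\right)\theta^{r-k}=\Phi\left(\begin{array}{cc|c} a-\alpha\theta & b-\beta\theta & n \\ \alpha & \beta & k \end{array}\right). \]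
   Context: $\delta(m)=1$ for $m$ odd, $0$ for $m$ even; $\lfloor\cdot\rfloor$ is the floor. For indeterminates $a,b,\alpha,\beta$ and $n\ge1$, $\Psi\left(\begin{array}{cc|c} a & b & n \\ \alpha & \beta & r \end{array}\right)$ ($0\le r\le\lfloor n/2\rfloor$) and $\Phi\left(\begin{array}{cc|c} a & b & n \\ \alpha & \beta & r \end{array}\right)$ ($0\le r\le\lfloor (n-1)/2\rfloor$) are the unique polynomials in $\mathbb{Z}[a,b,\alpha,\beta]$ such that, identically in $x,y$, $(\beta a-\alpha b)^{\lfloor n/2\rfloor}\frac{x^n+y^n}{(x+y)^{\delta(n)}}=\sum_{r}\Psi\left(\begin{array}{cc|c} a & b & n \\ \alpha & \beta & r \end{array}\right)(\alpha x^2+\beta xy+\alpha y^2)^{\lfloor n/2\rfloor-r}(ax^2+bxy+ay^2)^r$ and $(\beta a-\alpha b)^{\lfloor (n-1)/2\rfloor}\frac{x^n-y^n}{(x-y)(x+y)^{\delta(n-1)}}=\sum_{r}\Phi\left(\begin{array}{cc|c} a & b & n \\ \alpha & \beta & r \end{array}\right)(\alpha x^2+\beta xy+\alpha y^2)^{\lfloor (n-1)/2\rfloor-r}(ax^2+bxy+ay^2)^r$; for numerical arguments these polynomials are evaluated. *)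

From HB Require Import structures.
From mathcomp Require Import all_boot all_order all_algebra.
From mathcomp Require Import mpoly.
From mathcomp Require Import complex.
From mathcomp Require Import Rstruct.
From Stdlib Require Import ClassicalEpsilon.
Set Implicit Arguments. Unset Strict Implicit. Unset Printing Implicit Defensive.
Import GRing.Theory.
Local Open Scope ring_scope.

Definition C : Type := complex Rdefinitions.R.
HB.instance Definition _ := GRing.Field.on C.

Definition P4 := {mpoly int[4]}.
Definition P6 := {mpoly P4[2]}.

Definition va : P4 := 'X_(inord 0).
Definition vb : P4 := 'X_(inord 1).
Definition valpha : P4 := 'X_(inord 2).
Definition vbeta : P4 := 'X_(inord 3).

Definition cst (p : P4) : P6 := p%:MP.
Definition vx : P6 := 'X_(inord 0).
Definition vy : P6 := 'X_(inord 1).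

Definition Qalpha : P6 := cst valpha * vx ^+ 2 + cst vbeta * (vx * vy) + cst valpha * vy ^+ 2.
Definition Qa : P6 := cst va * vx ^+ 2 + cst vb * (vx * vy) + cst va * vy ^+ 2.
Definition vdet : P4 := vbeta * va - valpha * vb.

(* delta(m) = odd m (as 0/1), floor(n/2) = n./2 *)
(* c is an expansion of (beta a - alpha b)^{floor(n/2)} (x^n+y^n)/(x+y)^{delta(n)};
   the division is written by multiplying through by (x+y)^{delta(n)}
   (P6 is an integral domain). *)
Definition psi_expansion (n : nat) (c : nat -> P4) : Prop :=
  (forall r, (n./2 < r)%N -> c r = 0) /\
  cst (vdet ^+ n./2) * (vx ^+ n + vy ^+ n) =
  (vx + vy) ^+ (odd n) *
    \sum_(r < n./2.+1) cst (c r) * Qalpha ^+ (n./2 - r) * Qa ^+ r.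

Definition phi_expansion (n : nat) (c : nat -> P4) : Prop :=
  (forall r, ((n.-1)./2 < r)%N -> c r = 0) /\
  cst (vdet ^+ (n.-1)./2) * (vx ^+ n - vy ^+ n) =
  (vx - vy) * (vx + vy) ^+ (odd n.-1) *
    \sum_(r < (n.-1)./2.+1) cst (c r) * Qalpha ^+ ((n.-1)./2 - r) * Qa ^+ r.

Definition Psi_poly (n : nat) : nat -> P4 :=
  epsilon (inhabits (fun _ => 0)) (psi_expansion n).
Definition Phi_poly (n : nat) : nat -> P4 :=
  epsilon (inhabits (fun _ => 0)) (phi_expansion n).

Definition ev4 (a b al be : C) (p : P4) : C :=
  mmap (fun z : int => z%:~R) (fun i : 'I_4 => nth 0 [:: a; b; al; be] i) p.

Definition Psi (a b al be : C) (n r : nat) : C := ev4 a b al be (Psi_poly n r).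
Definition Phi (a b al be : C) (n r : nat) : C := ev4 a b al be (Phi_poly n r).

From HB Require Import structures.
From mathcomp Require Import all_boot all_order all_algebra.
From mathcomp Require Import complex mpoly Rstruct ring zify.
From Stdlib Require Import ClassicalEpsilon.
Set Implicit Arguments. Unset Strict Implicit. Unset Printing Implicit Defensive.
Import GRing.Theory Num.Theory.
Local Open Scope ring_scope.

(* Write A = sym_quad alpha beta x y and B = sym_quad a b x y. The shift
   (a, b) -> (a - alpha th, b - beta th) replaces B by B - th A and keeps
   beta a - alpha b fixed, so evaluating the defining identity at both
   parameter sets and cancelling the common factor (x + y)^delta (resp.
   (x - y)(x + y)^delta) gives
     sum_r Psi_r A^(m - r) B^r = sum_k Psi'_k A^(m - k) (B - th A)^k,
   Psi' being Psi at the shifted parameters. Expanding B = (B - th A) + th A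
   binomially, the k-th coefficient on the left becomes the left-hand side of
   the identity, so it suffices that coefficients in such a basis are unique.
   They are when beta a - alpha b != 0: for all but two values mu the system
   A = 1, B = mu has a solution with x + y and x - y nonzero (their squares
   are linear in mu), so the coefficient polynomial of a vanishing form has
   infinitely many roots. The expansions themselves exist by the recurrence
     x^(k+4) +- y^(k+4) = (x^2 + y^2)(x^(k+2) +- y^(k+2)) - (x y)^2 (x^k +- y^k),
   since (beta a - alpha b)(x^2 + y^2) and (beta a - alpha b) x y are linear
   combinations of A and B. *)

Definition hform (R : comNzRingType) (m : nat) (c : nat -> R) (A B : R) : R :=
  \sum_(r < m.+1) c r * A ^+ (m - r) * B ^+ r.

Lemma eq_hform (R : comNzRingType) m (c d : nat -> R) (A B : R) :
  c =1 d -> hform m c A B = hform m d A B.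
Proof. by move=> cd; apply: eq_bigr => r _; rewrite cd. Qed.

Lemma hformB (R : comNzRingType) m (c d : nat -> R) (A B : R) :
  hform m (fun r => c r - d r) A B = hform m c A B - hform m d A B.
Proof. by rewrite /hform -sumrB; apply: eq_bigr => i _; rewrite !mulrBl. Qed.

Lemma rmorph_hform (R S : comNzRingType) (f : {rmorphism R -> S}) m c (A B : R) :
  f (hform m c A B) = hform m (f \o c) (f A) (f B).
Proof. by rewrite /hform rmorph_sum; apply: eq_bigr => i _; rewrite !rmorphM !rmorphXn. Qed.

Lemma hform_shift (R : comNzRingType) m (c : nat -> R) (A B t : R) :
  hform m c A (B + t * A)
  = hform m (fun k => \sum_(k <= r < m.+1) 'C(r, k)%:R * c r * t ^+ (r - k)) A B.
Proof.
pose G r k : R := if (k <= r)%N then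
  'C(r, k)%:R * c r * t ^+ (r - k) * A ^+ (m - k) * B ^+ k else 0.
transitivity (\sum_(r < m.+1) \sum_(k < m.+1) G r k).
  apply: eq_bigr => -[r /= lt_rm] _.
  rewrite addrC exprDn mulr_sumr.
  rewrite (big_ord_widen m.+1 (fun k => c r * A ^+ (m - r) *
    ((t * A) ^+ (r - k) * B ^+ k *+ 'C(r, k))) lt_rm) big_mkcond /=.
  apply: eq_bigr => k _; rewrite /G ltnS; case: leqP => // le_kr.
  have -> : (m - k = (m - r) + (r - k))%N by lia.
  by rewrite exprD exprMn -mulr_natl; ring.
rewrite exchange_big /=; apply: eq_bigr => k _.
rewrite big_geq_mkord /= !mulr_suml [RHS]big_mkcond /=.
by apply: eq_bigr => r _; rewrite /G; case: leqP => _ //; rewrite !mul0r.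
Qed.

Definition lin_poly (R : nzRingType) (u v : R) : {poly R} := v *: 'X + u%:P.

Lemma size_lin_poly (R : nzRingType) (u v : R) : (size (lin_poly u v) <= 2)%N.
Proof.
apply: leq_trans (size_polyD _ _) _.
rewrite geq_max (leq_trans (size_scale_leq _ _)) ?size_polyX //.
exact: leq_trans (size_polyC_leq1 _) _.
Qed.

Lemma size_mul_lin_poly (R : nzRingType) m (q : {poly R}) (u v : R) :
  (size q <= m.+1)%N -> (size (q * lin_poly u v)%R <= m.+2)%N.
Proof.
move=> size_q; apply: leq_trans (size_polyMleq _ _) _.
have := size_lin_poly u v; lia.
Qed.

Lemma lin_poly_eq0 (R : nzRingType) (u v : R) : lin_poly u v = 0 -> u = 0 /\ v = 0.
Proof.
move=> /polyP e; have := e 0%N; have := e 1%N.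
rewrite !coefD !coefZ !coefX !coefC /= mulr1 mulr0 addr0 add0r.
by move=> -> ->.
Qed.

Lemma horner_lin_poly (R : comNzRingType) (u v z : R) : (lin_poly u v).[z] = v * z + u.
Proof. by rewrite /lin_poly hornerD hornerZ hornerX hornerC. Qed.

Lemma hform_mul_lin (R S : comNzRingType) (f : {rmorphism R -> S}) m
    (q : {poly R}) (u v : R) (A B : S) :
  (size q <= m.+1)%N ->
  hform m.+1 (f \o nth 0 (q * lin_poly u v)) A B
  = (f u * A + f v * B) * hform m (f \o nth 0 q) A B.
Proof.
move=> size_q.
have coef_mul r : (q * lin_poly u v)`_r = v * (if r == 0%N then 0 else q`_r.-1) + q`_r * u.
  by rewrite mulrDr coefD -scalerAr coefZ coefMX coefMC.
rewrite /hform; under eq_bigr => i _ do rewrite /= coef_mul rmorphD !rmorphM !mulrDl.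
rewrite big_split /= mulrDl addrC; congr (_ + _).
  rewrite big_ord_recr /= (nth_default 0 size_q) rmorph0 !mul0r addr0 mulr_sumr.
  apply: eq_bigr => i _; rewrite subSn; last by rewrite -ltnS.
  by rewrite exprS; ring.
rewrite big_ord_recl /= rmorph0 mulr0 !mul0r add0r mulr_sumr; apply: eq_bigr => i _.
by rewrite /bump /= add0n add1n subSS exprS; ring.
Qed.

Lemma hform_lin (R S : comNzRingType) (f : {rmorphism R -> S}) (u v : R) (A B : S) :
  hform 1 (f \o nth 0 (lin_poly u v)) A B = f u * A + f v * B.
Proof.
rewrite -[lin_poly u v]mul1r hform_mul_lin ?size_poly1 //.
by rewrite /hform big_ord1 /= coef1 rmorph1 !expr0 !mulr1.
Qed.

Lemma poly_eq0_of_horner (R : numDomainType) (p : {poly R}) : (forall z, p.[z] = 0) -> p = 0.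
Proof.
move=> p_eq0; apply: (@roots_geq_poly_eq0 _ _ [seq i%:R | i <- iota 0 (size p)]).
- by apply/allP => _ /mapP[i _ ->]; apply/rootP.
- by rewrite map_inj_uniq ?iota_uniq // => i j /eqP; rewrite eqr_nat => /eqP.
- by rewrite size_map size_iota.
Qed.

Definition sym_quad (R : comNzRingType) (c d x y : R) : R :=
  c * x ^+ 2 + d * (x * y) + c * y ^+ 2.

Lemma det_shift (R : comNzRingType) (a b al be t : R) :
  be * (a - al * t) - al * (b - be * t) = be * a - al * b.
Proof. by ring. Qed.

Lemma sym_quad_shift (R : comNzRingType) (a b al be t x y : R) :
  sym_quad a b x y = sym_quad (a - al * t) (b - be * t) x y + t * sym_quad al be x y.
Proof. by rewrite /sym_quad; ring. Qed.

Section SymQuadBasis.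
Variables (R : numClosedFieldType) (a b al be : R).
Hypothesis det_neq0 : be * a - al * b != 0.

(* If sym_quad al be x y = 1 and sym_quad a b x y = mu, then
   (be * a - al * b) (x + y)^2 = Lplus.[mu] and (be * a - al * b) (x - y)^2 = Lminus.[mu]. *)
Let Lplus := lin_poly (2 * a - b) (be - 2 * al).
Let Lminus := lin_poly (- (b + 2 * a)) (be + 2 * al).

Lemma sym_quad_onto mu : Lplus.[mu] != 0 -> Lminus.[mu] != 0 ->
  exists x y, [/\ x + y != 0, x - y != 0, sym_quad al be x y = 1 & sym_quad a b x y = mu].
Proof.
set D := be * a - al * b => Lplus_neq0 Lminus_neq0.
have two_neq0 : 2 != 0 :> R by rewrite pnatr_eq0.
pose u := sqrtC (Lplus.[mu] / D); pose v := sqrtC (Lminus.[mu] / D).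
have u_neq0 : u != 0 by rewrite -sqrf_eq0 sqrtCK mulf_neq0 ?invr_eq0.
have v_neq0 : v != 0 by rewrite -sqrf_eq0 sqrtCK mulf_neq0 ?invr_eq0.
exists ((u + v) / 2), ((u - v) / 2).
have -> : (u + v) / 2 + (u - v) / 2 = u by field.
have -> : (u + v) / 2 - (u - v) / 2 = v by field.
have sym_quad_uv c d : sym_quad c d ((u + v) / 2) ((u - v) / 2)
    = c * ((u ^+ 2 + v ^+ 2) / 2) + d * ((u ^+ 2 - v ^+ 2) / 4).
  by rewrite /sym_quad; field.
rewrite !sym_quad_uv !sqrtCK !horner_lin_poly /D; split => //; field; exact: det_neq0.
Qed.

Lemma Lplus_Lminus_neq0 : Lplus != 0 /\ Lminus != 0.
Proof.
split; apply/eqP => /lin_poly_eq0[u0 v0]; move/eqP: det_neq0; apply.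
- have -> : be * a - al * b = a * (be - 2 * al) + al * (2 * a - b) by ring.
  by rewrite u0 v0 !mulr0 addr0.
- have -> : be * a - al * b = a * (be + 2 * al) - al * (b + 2 * a) by ring.
  by rewrite v0 -[b + _]opprK u0 oppr0 !mulr0 subr0.
Qed.

Lemma hform_sym_quad_eq0 m (d : nat -> R) :
  (forall x y, x + y != 0 -> x - y != 0 ->
     hform m d (sym_quad al be x y) (sym_quad a b x y) = 0) ->
  forall k, (k <= m)%N -> d k = 0.
Proof.
move=> d_eq0 k le_km; pose q := \poly_(i < m.+1) d i.
suff q_eq0 : q = 0.
  by have := congr1 (fun p : {poly R} => p`_k) q_eq0; rewrite coef_poly ltnS le_km coef0.
have [Lplus_neq0 Lminus_neq0] := Lplus_Lminus_neq0.
have roots mu : (Lplus * Lminus * q).[mu] = 0.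
  rewrite !hornerM; have [->|Lplus_mu] := eqVneq Lplus.[mu] 0; first by rewrite !mul0r.
  have [->|Lminus_mu] := eqVneq Lminus.[mu] 0; first by rewrite mulr0 mul0r.
  have [x [y [xy_p xy_m al_xy a_xy]]] := sym_quad_onto Lplus_mu Lminus_mu.
  have := d_eq0 x y xy_p xy_m; rewrite al_xy a_xy => hform_eq0.
  suff -> : q.[mu] = 0 by rewrite mulr0.
  rewrite horner_poly -[RHS]hform_eq0; apply: eq_bigr => r _.
  by rewrite expr1n mulr1.
move/eqP: (poly_eq0_of_horner roots).
by rewrite !mulf_eq0 (negbTE Lplus_neq0) (negbTE Lminus_neq0) => /eqP.
Qed.

End SymQuadBasis.

Lemma hform_shift_coef (R : numClosedFieldType) (a b al be t : R) m (c c' : nat -> R) :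
  be * a - al * b != 0 ->
  (forall x y, x + y != 0 -> x - y != 0 ->
    hform m c (sym_quad al be x y) (sym_quad a b x y)
    = hform m c' (sym_quad al be x y) (sym_quad (a - al * t) (b - be * t) x y)) ->
  forall k, (k <= m)%N -> \sum_(k <= r < m.+1) 'C(r, k)%:R * c r * t ^+ (r - k) = c' k.
Proof.
move=> det_neq0 c_c' k le_km; apply/eqP; rewrite -subr_eq0; apply/eqP; move: k le_km.
apply: (@hform_sym_quad_eq0 _ (a - al * t) (b - be * t) al be) => [|x y xy_p xy_m].
  by rewrite det_shift.
by rewrite hformB -hform_shift -sym_quad_shift c_c' // subrr.
Qed.

Lemma vdet_sum_sq : cst vdet * (vx ^+ 2 + vy ^+ 2) = cst (- vb) * Qalpha + cst vbeta * Qa.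
Proof. by rewrite /vdet /Qa /Qalpha /cst rmorphN rmorphB !rmorphM; ring. Qed.

Lemma vdet_prod : cst vdet * (vx * vy) = cst va * Qalpha + cst (- valpha) * Qa.
Proof. by rewrite /vdet /Qa /Qalpha /cst rmorphN rmorphB !rmorphM; ring. Qed.

(* The coefficients are stored as a polynomial q, so that multiplying the form
   by cst u * Qalpha + cst v * Qa amounts to multiplying q by lin_poly u v. *)
Definition Qform (m : nat) (q : {poly P4}) : P6 := hform m (cst \o nth 0 q) Qalpha Qa.

Lemma Qform0 (q : {poly P4}) : Qform 0 q = cst q`_0.
Proof. by rewrite /Qform /hform big_ord1 /= !expr0 !mulr1. Qed.

Lemma Qform_lin (u v : P4) : Qform 1 (lin_poly u v) = cst u * Qalpha + cst v * Qa.
Proof. exact: hform_lin. Qed.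

Lemma Qform_mul_lin m (q : {poly P4}) (u v : P4) : (size q <= m.+1)%N ->
  Qform m.+1 (q * lin_poly u v) = (cst u * Qalpha + cst v * Qa) * Qform m q.
Proof. exact: hform_mul_lin. Qed.

Lemma QformB m (p q : {poly P4}) : Qform m (p - q) = Qform m p - Qform m q.
Proof. by rewrite /Qform -hformB; apply: eq_hform => r /=; rewrite coefB /cst rmorphB. Qed.

Definition expandable (f g : nat -> P6) (k : nat) : Prop :=
  exists2 q : {poly P4}, (size q <= k./2.+1)%N &
    cst (vdet ^+ k./2) * f k = g k * Qform k./2 q.

Lemma expandable_rec (f g : nat -> P6) :
  (forall k, f k.+4 = (vx ^+ 2 + vy ^+ 2) * f k.+2 - (vx * vy) ^+ 2 * f k) ->
  (forall k, g k.+2 = g k) ->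
  (forall k, (k < 4)%N -> expandable f g k) ->
  forall k, expandable f g k.
Proof.
move=> f_rec g_per base; elim/ltn_ind => -[|[|[|[|j]]]] IH; try exact: base.
have [q0 size_q0 e0] := IH j (ltnW (ltnW (ltnW (ltnSn _)))).
have [q2 size_q2 e2] := IH j.+2 (ltnW (ltnSn _)).
rewrite /= g_per in size_q2 e2.
have size_lq0 := size_mul_lin_poly va (- valpha) size_q0.
exists (q2 * lin_poly (- vb) vbeta - q0 * lin_poly va (- valpha) * lin_poly va (- valpha)) => /=.
  apply: leq_trans (size_polyD _ _) _; rewrite size_polyN geq_max.
  by apply/andP; split; apply: size_mul_lin_poly.
have -> : Qform (j./2).+2 (q2 * lin_poly (- vb) vbeta
                           - q0 * lin_poly va (- valpha) * lin_poly va (- valpha))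
    = cst vdet * (vx ^+ 2 + vy ^+ 2) * Qform (j./2).+1 q2
      - (cst vdet * (vx * vy)) ^+ 2 * Qform j./2 q0.
  rewrite QformB vdet_sum_sq vdet_prod; congr (_ - _); first exact: Qform_mul_lin.
  by rewrite (Qform_mul_lin _ _ size_lq0) (Qform_mul_lin _ _ size_q0) mulrA expr2.
rewrite f_rec !g_per; rewrite /cst !rmorphXn in e0 e2 *.
transitivity (vdet%:MP * (vx ^+ 2 + vy ^+ 2) * (vdet%:MP ^+ (j./2).+1 * f j.+2) -
   (vdet%:MP * (vx * vy)) ^+ 2 * (vdet%:MP ^+ j./2 * f j)).
  by rewrite !exprS; ring.
by rewrite e0 e2; ring.
Qed.

Lemma psi_expandable k :
  expandable (fun k => vx ^+ k + vy ^+ k) (fun k => (vx + vy) ^+ odd k) k.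
Proof.
apply: expandable_rec => [j|j|].
- by rewrite !exprS; ring.
- by rewrite /= negbK.
case=> [|[|[|[|//]]]] _.
- exists 2%:P; first exact: size_polyC_leq1.
  by rewrite /= Qform0 coefC /cst !expr0 rmorph1 rmorph_nat; ring.
- exists 1; first by rewrite size_poly1.
  by rewrite /= Qform0 coef1 /cst expr0 rmorph1; ring.
- exists (lin_poly (- vb) vbeta); first exact: size_lin_poly.
  by rewrite /= Qform_lin -vdet_sum_sq; ring.
- exists (lin_poly (- (va + vb)) (valpha + vbeta)); first exact: size_lin_poly.
  rewrite /= Qform_lin /vdet /Qa /Qalpha /cst !(rmorphXn, rmorphN, rmorphB, rmorphD, rmorphM).
  ring.
Qed.

Lemma phi_expandable k :
  expandable (fun k => vx ^+ k.+1 - vy ^+ k.+1) (fun k => (vx - vy) * (vx + vy) ^+ odd k) k.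
Proof.
apply: expandable_rec => [j|j|].
- by rewrite !exprS; ring.
- by rewrite /= negbK.
case=> [|[|[|[|//]]]] _.
- exists 1; first by rewrite size_poly1.
  by rewrite /= Qform0 coef1 /cst expr0 rmorph1; ring.
- exists 1; first by rewrite size_poly1.
  by rewrite /= Qform0 coef1 /cst expr0 rmorph1; ring.
- exists (lin_poly (va - vb) (vbeta - valpha)); first exact: size_lin_poly.
  rewrite /= Qform_lin /vdet /Qa /Qalpha /cst !(rmorphXn, rmorphN, rmorphB, rmorphD, rmorphM).
  ring.
- exists (lin_poly (- vb) vbeta); first exact: size_lin_poly.
  by rewrite /= Qform_lin -vdet_sum_sq; ring.
Qed.

Lemma Psi_poly_spec n : psi_expansion n (Psi_poly n).
Proof.
apply: epsilon_spec; have [q size_q e] := psi_expandable n.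
exists (nth 0 q); split; last exact: e.
by move=> r lt_r; apply: nth_default; apply: leq_trans size_q lt_r.
Qed.

Lemma Phi_poly_spec n : (1 <= n)%N -> phi_expansion n (Phi_poly n).
Proof.
case: n => // k _; apply: epsilon_spec; have [q size_q e] := phi_expandable k.
exists (nth 0 q); split; last exact: e.
by move=> r lt_r; apply: nth_default; apply: leq_trans size_q lt_r.
Qed.

HB.instance Definition _ (a b al be : C) :=
  GRing.RMorphism.copy (ev4 a b al be) (ev4 a b al be : {rmorphism P4 -> C}).

Section Evaluation.
Variables a b al be : C.

Definition ev6 (x y : C) : P6 -> C :=
  mmap (ev4 a b al be) (fun i : 'I_2 => nth 0 [:: x; y] i).

HB.instance Definition _ x y :=
  GRing.RMorphism.copy (ev6 x y) (ev6 x y : {rmorphism P6 -> C}).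

Lemma ev4_X i : (i < 4)%N -> ev4 a b al be 'X_(inord i) = nth 0 [:: a; b; al; be] i.
Proof. by move=> lt_i4; rewrite /ev4 /mpolyX [LHS]mmapX mmap1U inordK. Qed.

Lemma ev6_X x y i : (i < 2)%N -> ev6 x y 'X_(inord i) = nth 0 [:: x; y] i.
Proof. by move=> lt_i2; rewrite /ev6 /mpolyX [LHS]mmapX mmap1U inordK. Qed.

Lemma ev4_vdet : ev4 a b al be vdet = be * a - al * b.
Proof. by rewrite /vdet rmorphB !rmorphM /va /vb /valpha /vbeta /= !ev4_X. Qed.

Lemma ev6_cst x y p : ev6 x y (cst p) = ev4 a b al be p.
Proof. exact: mmapC. Qed.

Lemma ev6_sym_quad x y (c d : P4) :
  ev6 x y (cst c * vx ^+ 2 + cst d * (vx * vy) + cst c * vy ^+ 2)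
  = sym_quad (ev4 a b al be c) (ev4 a b al be d) x y.
Proof. by rewrite !rmorphD !rmorphM /= !ev6_cst /vx /vy !ev6_X //= /sym_quad !expr2. Qed.

Lemma ev6_Qalpha x y : ev6 x y Qalpha = sym_quad al be x y.
Proof. by rewrite /Qalpha ev6_sym_quad /valpha /vbeta !ev4_X. Qed.

Lemma ev6_Qa x y : ev6 x y Qa = sym_quad a b x y.
Proof. by rewrite /Qa ev6_sym_quad /va /vb !ev4_X. Qed.

Lemma ev6_hform x y m (c : nat -> P4) :
  ev6 x y (hform m (cst \o c) Qalpha Qa)
  = hform m (ev4 a b al be \o c) (sym_quad al be x y) (sym_quad a b x y).
Proof.
rewrite rmorph_hform /= ev6_Qalpha ev6_Qa; apply: eq_hform => r /=; exact: ev6_cst.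
Qed.

Lemma Psi_eval x y n :
  (be * a - al * b) ^+ n./2 * (x ^+ n + y ^+ n) =
  (x + y) ^+ odd n * hform n./2 (Psi a b al be n) (sym_quad al be x y) (sym_quad a b x y).
Proof.
have E : cst (vdet ^+ n./2) * (vx ^+ n + vy ^+ n)
         = (vx + vy) ^+ odd n * hform n./2 (cst \o Psi_poly n) Qalpha Qa.
  exact: (Psi_poly_spec n).2.
move/(congr1 (ev6 x y)): E; rewrite !rmorphM /= ev6_hform.
by rewrite ev6_cst rmorphXn /= ev4_vdet !(rmorphB, rmorphD, rmorphXn) /= /vx /vy !ev6_X.
Qed.

Lemma Phi_eval x y n : (1 <= n)%N ->
  (be * a - al * b) ^+ (n.-1)./2 * (x ^+ n - y ^+ n) =
  (x - y) * (x + y) ^+ odd n.-1 *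
    hform (n.-1)./2 (Phi a b al be n) (sym_quad al be x y) (sym_quad a b x y).
Proof.
move=> n_gt0.
have E : cst (vdet ^+ (n.-1)./2) * (vx ^+ n - vy ^+ n)
         = (vx - vy) * (vx + vy) ^+ odd n.-1 * hform (n.-1)./2 (cst \o Phi_poly n) Qalpha Qa.
  exact: (Phi_poly_spec n_gt0).2.
move/(congr1 (ev6 x y)): E; rewrite !rmorphM /= ev6_hform.
by rewrite ev6_cst rmorphXn /= ev4_vdet !(rmorphB, rmorphD, rmorphXn) /= /vx /vy !ev6_X.
Qed.

End Evaluation.

Theorem theorem10p5 (a b al be th : C) (n k : nat) :
  be * a - al * b != 0 -> (1 <= n)%N ->
  ((k <= n./2)%N ->
     \sum_(k <= r < n./2.+1) ('C(r, k))%:R * Psi a b al be n r * th ^+ (r - k)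
     = Psi (a - al * th) (b - be * th) al be n k) /\
  ((k <= (n.-1)./2)%N ->
     \sum_(k <= r < (n.-1)./2.+1) ('C(r, k))%:R * Phi a b al be n r * th ^+ (r - k)
     = Phi (a - al * th) (b - be * th) al be n k).
Proof.
move=> det_neq0 n_gt0; split=> le_k.
- apply: (hform_shift_coef det_neq0 _ le_k) => x y xy_p _.
  apply: (mulfI (expf_neq0 (odd n) xy_p)).
  by rewrite -Psi_eval -Psi_eval det_shift.
- apply: (hform_shift_coef det_neq0 _ le_k) => x y xy_p xy_m.
  apply: (mulfI (mulf_neq0 xy_m (expf_neq0 (odd n.-1) xy_p))).
  by rewrite -!Phi_eval // det_shift.
Qed.
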